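(* Let $G$ be a group, $\phi\in\mathrm{End}(G)$, and $N\trianglelefteq G$ a normal subgroup with $\phi(N)\subseteq N$. Let $\hat\phi\in\mathrm{End}(G/N)$ be given by $\hat\phi(gN):=\phi(g)N$ and let $\rho:G\to G/N$ be the canonical projection. Then for every $\phi$-cellular automaton $\mathcal{T}:A^G\to A^G$ there exists a unique $\hat\phi$-cellular automaton $\widehat{\mathcal{T}}:A^{G/N}\to A^{G/N}$ such that $\rho^*\circ\widehat{\mathcal{T}}=\mathcal{T}\circ\rho^*$.
   Context: $A$ is a finite set with $|A|\ge 2$. For a group $G$, $A^G$ is the set of functions $G\to A$ with shift action $(g\cdot x)(k):=x(g^{-1}k)$. For groups $G,H$ and $\phi\in\mathrm{Hom}(H,G)$, a $\phi$-cellular automaton is a map $\mathcal{T}:A^G\to A^H$ for which there exist finite $T\subseteq G$ and $\mu:A^T\to A$ with $\mathcal{T}(x)(h)=\mu((\phi(h^{-1})\cdot x)|_T)$ for all $x,h$. For a homomorphism $\rho:G\to G/N$, $\rho^*:A^{G/N}\to A^G$ is $\rho^*(x):=x\circ\rho$. *)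

From mathcomp Require Import all_boot.
Set Implicit Arguments. Unset Strict Implicit. Unset Printing Implicit Defensive.

Record group := Group {
  gcar :> Type;
  gmul : gcar -> gcar -> gcar;
  ginv : gcar -> gcar;
  gone : gcar;
  gmulA : forall x y z, gmul x (gmul y z) = gmul (gmul x y) z;
  gmul1 : forall x, gmul gone x = x;
  gmulV : forall x, gmul (ginv x) x = gone
}.

Definition is_hom (G H : group) (f : G -> H) : Prop :=
  forall x y, f (gmul x y) = gmul (f x) (f y).

Definition is_normal_subgroup (G : group) (N : G -> Prop) : Prop :=
  [/\ N (gone G),
      (forall x y, N x -> N y -> N (gmul x y)),
      (forall x, N x -> N (ginv x)) &
      (forall g x, N x -> N (gmul (gmul g x) (ginv g)))].

Definition shift (A : Type) (G : group) (g : G) (x : G -> A) : G -> A :=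
  fun k => x (gmul (ginv g) k).

Fixpoint in_list (X : Type) (t : X) (s : seq X) : Prop :=
  if s is u :: s' then u = t \/ in_list t s' else False.

(* phi-cellular automaton, phi : H -> G, Tr : A^G -> A^H.
   The local rule mu : A^T -> A is represented as a map on configurations
   depending only on the values on the finite set T (given as a list). *)
Definition is_phi_CA (A : Type) (G H : group) (phi : H -> G)
  (Tr : (G -> A) -> (H -> A)) : Prop :=
  exists (T : seq G) (mu : (G -> A) -> A),
    (forall x y : G -> A, (forall t, in_list t T -> x t = y t) -> mu x = mu y) /\
    (forall x h, Tr x h = mu (shift (phi (ginv h)) x)).

Definition pullback (A : Type) (G Q : group) (rho : G -> Q) (x : Q -> A) : G -> A :=
  fun g => x (rho g).

From mathcomp Require Import all_boot.
From Stdlib Require Import FunctionalExtensionality.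

Set Implicit Arguments. Unset Strict Implicit. Unset Printing Implicit Defensive.

(* Write Tr x h = mu (phi(h^-1) . x) with mu local on the finite window T.
   The descended automaton is forced: That x q := mu (rho^* (phihat(q^-1) . x)).
   - It is a phihat-cellular automaton, since mu o rho^* is local on the
     window rho(T) ([local_pullback]).
   - It intertwines the pullbacks: for q = rho g, phihat(q^-1) = rho(phi(g^-1)),
     and pulling back commutes with shifting ([shift_pullback]), so
     rho^*(That x) = Tr (rho^* x).
   - It is unique because rho^* is injective when rho is onto
     ([pullback_inj]), and the intertwining relation determines rho^*(That x).  The hypotheses on N only
   identify Q with G/N; the argument itself uses just that rho is an onto
   homomorphism with phihat o rho = rho o phi. *)

Section GroupFacts.
Variable G : group.

Lemma gmulI (a b c : G) : gmul a b = gmul a c -> b = c.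
Proof. by move=> eq_ab_ac; rewrite -(gmul1 b) -(gmul1 c) -(gmulV a) -!gmulA eq_ab_ac. Qed.

(* Right inverse law, derived from the left one: x x^-1 is idempotent. *)
Lemma gmulVr (x : G) : gmul x (ginv x) = gone G.
Proof.
set y := gmul x (ginv x).
have idem_y : gmul y y = y.
  by rewrite /y -(gmulA x (ginv x)) (gmulA (ginv x) x) gmulV gmul1.
have e : gmul (ginv y) (gmul y y) = gmul (ginv y) y by rewrite idem_y.
by rewrite gmulA gmulV gmul1 in e.
Qed.

Lemma gmul1r (x : G) : gmul x (gone G) = x.
Proof. by rewrite -(gmulV x) gmulA gmulVr gmul1. Qed.

Lemma ginv_uniq (a b : G) : gmul a b = gone G -> a = ginv b.
Proof. by move=> ab1; rewrite -(gmul1r a) -(gmulVr b) gmulA ab1 gmul1. Qed.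

End GroupFacts.

Lemma hom1 (G H : group) (f : G -> H) : is_hom f -> f (gone G) = gone H.
Proof. by move=> hf; apply: (@gmulI _ (f (gone G))); rewrite -hf gmul1 gmul1r. Qed.

Lemma homV (G H : group) (f : G -> H) (x : G) :
  is_hom f -> f (ginv x) = ginv (f x).
Proof. by move=> hf; apply: ginv_uniq; rewrite -hf gmulV hom1. Qed.

Lemma shift_pullback (A : Type) (G Q : group) (rho : G -> Q) (g : G) (x : Q -> A) :
  is_hom rho -> shift g (pullback rho x) = pullback rho (shift (rho g) x).
Proof.
move=> hrho; apply: functional_extensionality => k.
by rewrite /shift /pullback hrho homV.
Qed.

Lemma in_list_map (X Y : Type) (f : X -> Y) (t : X) (s : seq X) :
  in_list t s -> in_list (f t) (map f s).
Proof. by elim: s => //= u s IH [->|/IH]; [left|right]. Qed.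

Lemma local_pullback (A : Type) (G Q : group) (rho : G -> Q)
    (T : seq G) (mu : (G -> A) -> A) :
  (forall x y : G -> A, (forall t, in_list t T -> x t = y t) -> mu x = mu y) ->
  forall x y : Q -> A, (forall t, in_list t (map rho T) -> x t = y t) ->
    mu (pullback rho x) = mu (pullback rho y).
Proof. by move=> loc x y eq_xy; apply: loc => t /(in_list_map rho) /eq_xy. Qed.

Lemma pullback_inj (A : Type) (G Q : group) (rho : G -> Q) (x y : Q -> A) :
  (forall q : Q, exists g, rho g = q) -> pullback rho x = pullback rho y -> x = y.
Proof.
move=> surj eq_xy; apply: functional_extensionality => q.
by case: (surj q) => g <-; exact: (equal_f eq_xy g).
Qed.

Theorem lemma4p3 (A : finType) (hA : 1 < #|A|) (G Q : group)
  (phi : G -> G) (N : G -> Prop) (rho : G -> Q) (phihat : Q -> Q) :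
  is_hom phi ->
  is_normal_subgroup N ->
  (forall g, N g -> N (phi g)) ->
  is_hom rho ->
  (forall q : Q, exists g, rho g = q) ->
  (forall g, rho g = gone Q <-> N g) ->
  (forall g, phihat (rho g) = rho (phi g)) ->
  forall Tr : (G -> A) -> (G -> A), is_phi_CA phi Tr ->
  exists! That : (Q -> A) -> (Q -> A),
    is_phi_CA phihat That /\
    (forall x : Q -> A, pullback rho (That x) = Tr (pullback rho x)).
Proof.
move=> _ _ _ hrho surj _ phihat_rho Tr [T [mu [loc defTr]]].
pose That x q := mu (pullback rho (shift (phihat (ginv q)) x)).
have intertwine x : pullback rho (That x) = Tr (pullback rho x).
  apply: functional_extensionality => g.
  by rewrite defTr shift_pullback // /pullback /That -homV // phihat_rho.
exists That; split; first split=> //.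
  exists (map rho T), (fun y => mu (pullback rho y)).
  by split=> //; exact: local_pullback.
move=> That' [_ intertwine']; apply: functional_extensionality => x.
by apply: (pullback_inj surj); rewrite intertwine intertwine'.
Qed.
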